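(* Let $(\mathbb{P},\le,f)$ be a forcing property for $\mathcal{L}_A$. For every $p\in\mathbb{P}$ and every $\tau\in\mathcal{T}(C)$, $F^w_p(\inf_x d(\tau,x))=0$.
   Context: $\mathcal{L}$ is a countable continuous signature with distinguished metric symbol $d$; formulas of $\mathcal{L}_{\omega_1,\omega}$ are built from atomic formulas using $\neg$, $\tfrac12$, $\dotplus$, countable conjunctions $\bigwedge$ and $\inf_x$. $\mathcal{L}_A$ is a countable fragment, $C=\{c_i:i<\omega\}$ new constants, $\mathcal{L}_A(C)$ the smallest countable fragment of $\mathcal{L}_{\omega_1,\omega}(C)$ containing $\mathcal{L}_A$, $\mathcal{L}_A^{as}(C)$ its atomic sentences, $\mathcal{T}(C)$ closed terms. A forcing property $(\mathbb{P},\le,f)$: poset with $f_p\colon\mathcal{L}_A^{as}(C)\to[0,1]$ such that (1) $p\le q\Rightarrow f_p\le f_q$; (2) for every $p$, $\varepsilon>0$, $\tau,\sigma\in\mathcal{T}(C)$, atomic $\varphi(x)$ there are $q\le p$, $c\in C$ with $f_q(d(\tau,c))<\varepsilon$, $f_q(d(\tau,\sigma))<f_p(d(\sigma,\tau))+\varepsilon$, and if $f_p(d(\tau,\sigma))<\delta_{\varphi,x}(\varepsilon)$ then $f_q(\varphi(\sigma))<f_p(\varphi(\tau))+\varepsilon$. $F_p$: $f_p$ on atomics; $F_p(\neg\varphi)=1-\inf_{q\le p}F_q(\varphi)$; $F_p(\tfrac12\varphi)=\tfrac12F_p(\varphi)$; $F_p(\varphi\dotplus\psi)=\min(F_p(\varphi)+F_p(\psi),1)$;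 $F_p(\bigwedge\Phi)=\inf_{\varphi\in\Phi}F_p(\varphi)$; $F_p(\inf_x\varphi)=\inf_{c\in C}F_p(\varphi(c))$. $F^w_p(\varphi)=\sup_{q\le p}\inf_{q'\le q}F_{q'}(\varphi)$. *)

From HB Require Import structures.
From mathcomp Require Import all_boot all_order all_algebra.
From mathcomp Require Import all_classical all_reals.

Set Implicit Arguments.
Unset Strict Implicit.
Unset Printing Implicit Defensive.

Import Order.TTheory GRing.Theory Num.Theory.
Local Open Scope ring_scope.
Local Open Scope classical_set_scope.

(* Countable continuous signature, with a distinguished metric symbol  *)
(* d (handled by a dedicated atomic constructor), and moduli of        *)
(* uniform continuity for every symbol (joint moduli: if all arguments  *)
(* move by less than Delta(eps), the value moves by at most eps).      *)
Record signature (R : realType) := Signature {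
  funs : countType;
  fun_ar : funs -> nat;
  preds : countType;             (* predicate symbols other than d *)
  pred_ar : preds -> nat;
  fun_mod : funs -> R -> R;
  pred_mod : preds -> R -> R;
  dist_mod : R -> R;
  fun_mod_pos : forall f e, 0 < e -> 0 < fun_mod f e;
  pred_mod_pos : forall P e, 0 < e -> 0 < pred_mod P e;
  dist_mod_pos : forall e, 0 < e -> 0 < dist_mod e;
}.

Section Syntax.
Variables (R : realType) (L : signature R).

Inductive term : Type :=
| TVar : nat -> term
| TConst : nat -> term                 (* the new constant c_n of C *)
| TApp (f : funs L) : ('I_(fun_ar f) -> term) -> term.

Inductive atomic : Type :=
| ADist : term -> term -> atomic
| APred (P : preds L) : ('I_(pred_ar P) -> term) -> atomic.

(* Formulas of L_{omega_1,omega}(C): countable conjunctions are indexed *)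
(* by nat (a countable nonempty family).                                 *)
Inductive formula : Type :=
| FAtom : atomic -> formula
| FNeg : formula -> formula
| FHalf : formula -> formula
| FPlus : formula -> formula -> formula
| FConj : (nat -> formula) -> formula
| FInf : nat -> formula -> formula.

Fixpoint closed_term (t : term) : Prop :=
  match t with
  | TVar _ => False
  | TConst _ => True
  | TApp f args => forall i, closed_term (args i)
  end.

Definition closed_atomic (a : atomic) : Prop :=
  match a with
  | ADist t1 t2 => closed_term t1 /\ closed_term t2
  | APred P args => forall i, closed_term (args i)
  end.

Fixpoint tsubst (s : nat -> term) (t : term) : term :=
  match t with
  | TVar n => s n
  | TConst c => TConst c
  | TApp f args => TApp (fun i => tsubst s (args i))
  end.

Definition asubst (s : nat -> term) (a : atomic) : atomic :=
  match a with
  | ADist t1 t2 => ADist (tsubst s t1) (tsubst s t2)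
  | APred P args => APred (fun i => tsubst s (args i))
  end.

Definition upd (s : nat -> term) (x : nat) (sigma : term) : nat -> term :=
  fun n => if n == x then sigma else s n.
Definition subst1 (x : nat) (sigma : term) : nat -> term := upd TVar x sigma.

Fixpoint only_var_term (x : nat) (t : term) : Prop :=
  match t with
  | TVar n => n = x
  | TConst _ => True
  | TApp f args => forall i, only_var_term x (args i)
  end.

Definition only_var_atomic (x : nat) (a : atomic) : Prop :=
  match a with
  | ADist t1 t2 => only_var_term x t1 /\ only_var_term x t2
  | APred P args => forall i, only_var_term x (args i)
  end.

(* Moduli of uniform continuity delta_{phi,x}.  [None] means that x does *)
(* not occur, i.e. the modulus is +infinity (no constraint).             *)
Definition omin (a b : option R) : option R :=
  match a, b with
  | None, b => b
  | a, None => a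
  | Some u, Some v => Some (Num.min u v)
  end.

Fixpoint delta_term (x : nat) (t : term) (e : R) : option R :=
  match t with
  | TVar n => if n == x then Some e else None
  | TConst _ => None
  | TApp f args =>
      foldr (fun i acc => omin (delta_term x (args i) (fun_mod f e)) acc)
            None (enum 'I_(fun_ar f))
  end.

Definition delta_atomic (x : nat) (a : atomic) (e : R) : option R :=
  match a with
  | ADist t1 t2 => omin (delta_term x t1 (dist_mod L e))
                        (delta_term x t2 (dist_mod L e))
  | APred P args =>
      foldr (fun i acc => omin (delta_term x (args i) (pred_mod P e)) acc)
            None (enum 'I_(pred_ar P))
  end.

Definition lt_delta (r : R) (d : option R) : Prop :=
  match d with None => True | Some u => r < u end.

End Syntax.

Arguments TVar {R L}.
Arguments TConst {R L}.
Arguments FAtom {R L}.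
Arguments FInf {R L}.

Section Forcing.
Variables (R : realType) (L : signature R).
Variables (P : Type) (le : P -> P -> Prop) (f : P -> atomic L -> R).

(* f_p is only meaningful on atomic sentences (closed atomic formulas). *)
Record forcing_property : Prop := {
  fp_refl : forall p, le p p;
  fp_trans : forall p q r, le p q -> le q r -> le p r;
  fp_antisym : forall p q, le p q -> le q p -> p = q;
  fp_range : forall p a, closed_atomic a -> 0 <= f p a <= 1;
  fp_mono : forall p q a, closed_atomic a -> le p q -> f p a <= f q a;
  fp_cond2 : forall p (e : R) (tau sigma : term L) (x : nat) (phi : atomic L),
      0 < e -> closed_term tau -> closed_term sigma -> only_var_atomic x phi ->
      exists q c, le q p /\
        f q (ADist tau (TConst c)) < e /\
        f q (ADist tau sigma) < f p (ADist sigma tau) + e /\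
        (lt_delta (f p (ADist tau sigma)) (delta_atomic x phi e) ->
           f q (asubst (subst1 x sigma) phi) <
           f p (asubst (subst1 x tau) phi) + e)
}.

(* F_p, computed on formulas under a substitution [s] of closed terms   *)
(* (in practice constants of C) for the free variables.                 *)
Fixpoint Fenv (phi : formula L) (s : nat -> term L) (p : P) : R :=
  match phi with
  | FAtom a => f p (asubst s a)
  | FNeg psi => 1 - inf [set Fenv psi s q | q in [set q | le q p]]
  | FHalf psi => Fenv psi s p / 2
  | FPlus psi chi => Num.min (Fenv psi s p + Fenv chi s p) 1
  | FConj Phi => inf [set Fenv (Phi n) s p | n in [set: nat]]
  | FInf x psi =>
      inf [set Fenv psi (upd s x (TConst c)) p | c in [set: nat]]
  end.
End Forcing.

Section Forcing2.
Variables (R : realType) (L : signature R).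
Variables (P : Type) (le : P -> P -> Prop) (f : P -> atomic L -> R).

Definition Fp (p : P) (phi : formula L) : R := Fenv le f phi TVar p.

Definition Fw (p : P) (phi : formula L) : R :=
  sup [set inf [set Fp q' phi | q' in [set q' | le q' q]] | q in [set q | le q p]].
End Forcing2.

(* Every F_q(inf_x d(tau,x)) is nonnegative and at most f_q(d(tau,c)) for
   each constant c.  Condition (2) of a forcing property extends any q to
   some q' <= q and a witness c with f_q'(d(tau,c)) < eps, so the inner
   infimum of the weak forcing value vanishes below every q, and so does the
   outer supremum. *)

From mathcomp Require Import all_boot all_order all_algebra.
From mathcomp Require Import all_classical all_reals.
Import Order.TTheory GRing.Theory Num.Theory.
Local Open Scope ring_scope.
Local Open Scope classical_set_scope.

Lemma image_const (T U : Type) (A : set T) (g : T -> U) (c : U) :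
  A !=set0 -> (forall t, A t -> g t = c) -> g @` A = [set c].
Proof.
move=> [t0 At0] gc; apply/seteqP; split=> [_ [t At <-]|_ ->] /=.
  exact: gc.
by exists t0; rewrite ?gc.
Qed.

Lemma inf_eq0 (R : realType) (E : set R) :
  lbound E 0 -> (forall e, 0 < e -> exists2 y, E y & y < e) -> inf E = 0.
Proof.
move=> E_ge0 E_small; apply/eqP; rewrite eq_le; apply/andP; split.
  apply/ler_addgt0Pr => e e0; rewrite add0r.
  have [y Ey ye] := E_small e e0.
  by apply: le_trans (ltW ye); apply: ge_inf => //; exists 0.
have [y Ey _] := E_small 1 ltr01.
by apply: lb_le_inf => //; exists y.
Qed.

Lemma closed_tsubst (R : realType) (L : signature R) (s : nat -> term L) :
  forall t : term L, closed_term t -> tsubst s t = t.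
Proof.
fix IH 1 => t; case: t => [n|n|g args] //= ct.
by congr TApp; apply: funext => i; exact: IH (ct i).
Qed.

Section DistanceToTerm.
Variables (R : realType) (L : signature R) (P : Type).
Variables (le : P -> P -> Prop) (f : P -> atomic L -> R).
Hypothesis FP : forcing_property le f.
Variables (tau : term L) (x : nat).
Hypothesis ctau : closed_term tau.

Let dist_tau : formula L := FInf x (FAtom (ADist tau (TVar x))).

Lemma Fp_inf_dist q :
  Fp le f q dist_tau = inf [set f q (ADist tau (TConst c)) | c in [set: nat]].
Proof.
rewrite /Fp /=; congr inf; apply: eq_imagel => c _ /=.
by rewrite closed_tsubst //= /upd eqxx.
Qed.

Lemma lbound_dist_const q :
  lbound [set f q (ADist tau (TConst c)) | c in [set: nat]] 0.
Proof.
move=> _ [c _ <-].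
by case/andP: (fp_range FP q (a := ADist tau (TConst c)) (conj ctau I)).
Qed.

Lemma Fp_inf_dist_ge0 q : 0 <= Fp le f q dist_tau.
Proof.
rewrite Fp_inf_dist; apply: lb_le_inf; last exact: lbound_dist_const.
by exists (f q (ADist tau (TConst 0))), 0%N.
Qed.

Lemma Fp_inf_dist_le_const q c : Fp le f q dist_tau <= f q (ADist tau (TConst c)).
Proof.
rewrite Fp_inf_dist; apply: ge_inf; last by exists c.
by exists 0; exact: lbound_dist_const.
Qed.

Lemma Fp_inf_dist_small q e :
  0 < e -> exists q', le q' q /\ Fp le f q' dist_tau < e.
Proof.
move=> e0.
(* Only the first clause of condition (2) is needed; the atomic formula
   it quantifies over is instantiated by an arbitrary sentence. *)
have [q' [c [q'q [dist_c _]]]] := fp_cond2 FP q e0 ctau ctau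
  (x := 0%N) (phi := ADist (TConst 0) (TConst 0)) (conj I I).
by exists q'; split=> //; apply: le_lt_trans (Fp_inf_dist_le_const q' c) dist_c.
Qed.

Lemma inf_below_Fp_inf_dist q :
  inf [set Fp le f q' dist_tau | q' in [set q' | le q' q]] = 0.
Proof.
apply: inf_eq0 => [_ [q' _ <-]|e e0]; first exact: Fp_inf_dist_ge0.
have [q' [q'q small]] := Fp_inf_dist_small q e e0.
by exists (Fp le f q' dist_tau) => //; exists q'.
Qed.

End DistanceToTerm.

Theorem lemma2p10 (R : realType) (L : signature R) (P : Type)
  (le : P -> P -> Prop) (f : P -> atomic L -> R) :
  forcing_property le f ->
  forall (p : P) (tau : term L) (x : nat), closed_term tau ->
    Fw le f p (FInf x (FAtom (ADist tau (TVar x)))) = 0.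
Proof.
move=> FP p tau x ctau; rewrite /Fw (@image_const _ _ _ _ 0) ?sup1 //.
  by exists p; exact: fp_refl FP p.
by move=> q _; exact: inf_below_Fp_inf_dist.
Qed.
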